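(* The class of graphs isomorphic to $KB(G)$ for some $K_3$-free graph $G$ is a proper subclass of the class of graphs isomorphic to $H^2$ for some graph $H$. (In particular, the square of the net graph is not isomorphic to $KB(G)$ for any $K_3$-free graph $G$.)
   Context: All graphs are finite and simple. A biclique of a graph $G$ is a set $P\subseteq V(G)$ such that the induced subgraph $G[P]$ is a complete bipartite graph with both parts nonempty, and $P$ is inclusion-maximal with this property. The biclique graph $KB(G)$ has the set of bicliques of $G$ as vertex set, two distinct bicliques being adjacent iff they intersect. For a graph $H$, the square $H^2$ has vertex set $V(H)$, two distinct vertices being adjacent iff their distance in $H$ is at most $2$. The net is the graph on six vertices $x_1,x_2,x_3,s_1,s_2,s_3$ whose edges are $x_1x_2,x_2x_3,x_1x_3,x_1s_1,x_2s_2,x_3s_3$. *)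

From mathcomp Require Import all_boot.
Set Implicit Arguments. Unset Strict Implicit. Unset Printing Implicit Defensive.

Definition simple_graph (T : finType) (e : rel T) : Prop :=
  symmetric e /\ irreflexive e.

Definition K3_free (T : finType) (e : rel T) : Prop :=
  forall x y z : T, e x y -> e y z -> e x z -> False.

Definition is_cbip (T : finType) (e : rel T) (P : {set T}) : bool :=
  [exists X : {set T}, exists Y : {set T},
     [&& X != set0, Y != set0, [disjoint X & Y], X :|: Y == P &
         [forall x in P, forall y in P,
            e x y == ((x \in X) && (y \in Y) || (x \in Y) && (y \in X))]]].

Definition is_biclique (T : finType) (e : rel T) (P : {set T}) : bool :=
  is_cbip e P && [forall Q : {set T}, (P \subset Q) && is_cbip e Q ==> (Q == P)].

Definition KBv (T : finType) (e : rel T) : finType :=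
  {P : {set T} | is_biclique e P}.

Definition KB_rel (T : finType) (e : rel T) : rel (KBv e) :=
  fun A B => (val A != val B) && ~~ [disjoint val A & val B].

Arguments KB_rel {T} e.

Definition sq (U : finType) (h : rel U) : rel U :=
  fun x y => (x != y) && (h x y || [exists z, h x z && h z y]).

Definition isomorphic (T1 T2 : finType) (e1 : rel T1) (e2 : rel T2) : Prop :=
  exists f : T1 -> T2, bijective f /\ forall x y, e2 (f x) (f y) = e1 x y.

(* the net: vertices 0,1,2 = x1,x2,x3 ; 3,4,5 = s1,s2,s3 *)
Definition net_edges : seq (nat * nat) :=
  [:: (0, 1); (1, 2); (0, 2); (0, 3); (1, 4); (2, 5)]%N.

Definition net_rel : rel 'I_6 :=
  fun i j => has (fun p : nat * nat =>
                    ((p.1 == i) && (p.2 == j)) || ((p.1 == j) && (p.2 == i)))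
                 net_edges.

From mathcomp Require Import all_boot zify.
Set Implicit Arguments. Unset Strict Implicit. Unset Printing Implicit Defensive.

(* Inclusion.  In a triangle-free graph a vertex set is complete bipartite
   iff it contains an edge and non-adjacency is transitive on it; hence for
   every vertex v the set {v} + N(v) extends to a biclique, a "star" of v.
   Call two distinct bicliques A, C star-adjacent if they share a vertex v
   with N(v) inside A or inside C.  Two star-adjacency steps always land on
   an intersecting biclique, and two bicliques sharing v are joined through
   a star of v; so KB(G) is exactly the square of star-adjacency.

   Strictness.  Suppose f : KB(G) -> net^2 is an isomorphism.  The bicliques
   mapped to the pendant vertices s1, s2, s3 ("pendant bicliques") are
   pairwise disjoint and meet every other biclique.  Counting shows that
   each pendant biclique is star-adjacent to exactly one of the three other
   ("inner") bicliques.  From this we derive that a vertex p of a pendant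
   biclique S1 with N(p) not inside S1 would produce a triangle p, q, r with
   q in S2 and r in S3; so N(p) lies in S1 for all such p, making S1
   star-adjacent to every inner biclique, a contradiction. *)

Lemma meetP (T : finType) (A B : {set T}) :
  reflect (exists x, x \in A /\ x \in B) (~~ [disjoint A & B]).
Proof.
rewrite disjoints_subset; apply: (iffP subsetPn) => [[x xA]|[x [xA xB]]].
  by rewrite inE negbK => xB; exists x.
by exists x; rewrite // inE negbK.
Qed.

Section Bicliques.
Variables (T : finType) (e : rel T).
Hypotheses (e_simple : simple_graph e) (e_K3 : K3_free e).
Let e_sym : symmetric e := e_simple.1.
Let e_irr : irreflexive e := e_simple.2.

Definition Nb (v : T) : {set T} := [set u | e v u].

Lemma inNb v u : (u \in Nb v) = e v u.
Proof. by rewrite inE. Qed.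

Definition nonadj_trans (P : {set T}) : Prop :=
  forall x y z, x \in P -> y \in P -> z \in P -> ~~ e x y -> ~~ e y z -> ~~ e x z.

(* Complete bipartite sets of a triangle-free graph: an edge, and the two
   sides are the classes of non-adjacency. *)
Lemma cbipP (P : {set T}) :
  is_cbip e P <-> (exists x y, [/\ x \in P, y \in P & e x y]) /\ nonadj_trans P.
Proof.
split.
  case/existsP=> X /existsP [Y /and5P [nX nY dXY /eqP UP /forall_inP H]].
  have eP x y : x \in P -> y \in P ->
      e x y = (x \in X) && (y \in Y) || (x \in Y) && (y \in X).
    by move=> xP yP; move/forall_inP: (H x xP) => /(_ y yP) /eqP.
  have inY x : x \in P -> (x \in Y) = ~~ (x \in X).
    rewrite -UP inE; case xX: (x \in X) => /=; last by move=> ->.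
    by move=> _; apply/negP => xY; rewrite (disjointFr dXY xX) in xY.
  split.
    case/set0Pn: nX => x xX; case/set0Pn: nY => y yY.
    have xP : x \in P by rewrite -UP inE xX.
    have yP : y \in P by rewrite -UP inE yY orbT.
    by exists x, y; rewrite eP // xX yY.
  move=> x y z xP yP zP; rewrite !eP // !inY //.
  by case: (x \in X); case: (y \in X); case: (z \in X).
case=> [[a [b [aP bP ab]]] tr].
apply/existsP; exists [set x in P | ~~ e a x].
apply/existsP; exists [set x in P | e a x].
apply/and5P; split.
- by apply/set0Pn; exists a; rewrite inE aP e_irr.
- by apply/set0Pn; exists b; rewrite inE bP ab.
- by rewrite disjoints_subset; apply/subsetP => x; rewrite !inE => /andP[-> ->].
- by apply/eqP/setP => x; rewrite !inE; case: (x \in P); case: (e a x).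
apply/forall_inP => x xP; apply/forall_inP => y yP; rewrite !inE xP yP /=.
case ax: (e a x); case ay: (e a y) => /=.
- by apply/eqP/negbTE/negP => xy; apply: (e_K3 ax xy ay).
- case xy: (e x y) => //=.
  by have := tr a y x aP yP xP; rewrite ay (e_sym y x) xy ax => /(_ isT isT).
- case xy: (e x y) => //=.
  by have := tr a x y aP xP yP; rewrite ax xy ay => /(_ isT isT).
- by rewrite eqbF_neg; apply: (tr x a y xP aP yP); rewrite ?(e_sym x a) ?ax ?ay.
Qed.

Lemma cbip_neighbour (P : {set T}) x :
  is_cbip e P -> x \in P -> exists y, y \in P /\ e x y.
Proof.
case/cbipP=> [[a [b [aP bP ab]]] tr] xP.
case xa: (e x a); first by exists a.
case xb: (e x b); first by exists b.
by have := tr a x b aP xP bP; rewrite (e_sym a x) xa xb ab => /(_ isT isT).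
Qed.

Lemma cbip_cross (P : {set T}) x y z : is_cbip e P ->
  x \in P -> y \in P -> z \in P -> e x y -> ~~ e x z -> e y z.
Proof.
case/cbipP=> _ tr xP yP zP xy nxz; apply/negPn/negP => nyz.
by have := tr x z y xP zP yP nxz; rewrite (e_sym z y) xy => /(_ nyz).
Qed.

Lemma biclique_cbip (B : KBv e) : is_cbip e (val B).
Proof. by case/andP: (valP B). Qed.

Lemma biclique_max (P Q : {set T}) :
  is_biclique e P -> is_cbip e Q -> P \subset Q -> Q = P.
Proof. by case/andP=> _ /forallP /(_ Q) + cQ PQ; rewrite PQ cQ => /eqP. Qed.

(* A complete bipartite set of largest size above S is a biclique. *)
Lemma biclique_extend (S : {set T}) :
  is_cbip e S -> exists P, is_biclique e P /\ S \subset P.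
Proof.
move=> cS.
have [|P /andP[SP cP] Pmax] :=
  @arg_maxnP _ S (fun Q => (S \subset Q) && is_cbip e Q) (fun Q => #|Q|).
  by rewrite subxx cS.
exists P; split=> //; rewrite /is_biclique cP.
apply/forallP => Q; apply/implyP => /andP[PQ cQ].
by rewrite eq_sym eqEcard PQ; apply: Pmax; rewrite cQ (subset_trans SP PQ).
Qed.

Lemma star_biclique (S : KBv e) v : v \in val S ->
  exists M : KBv e, v \in val M /\ Nb v \subset val M.
Proof.
move=> vS; have [u [_ vu]] := cbip_neighbour (biclique_cbip S) vS.
have cstar : is_cbip e (v |: Nb v).
  apply/cbipP; split; first by exists v, u; rewrite !inE eqxx vu orbT.
  move=> x y z; rewrite !inE.
  move=> /predU1P[->|vx] /predU1P[->|vy] /predU1P[->|vz];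
    [by rewrite e_irr|by move=> _ ->|by rewrite vy|by rewrite vy
    |by rewrite e_sym vx|by rewrite e_sym vx|by rewrite (e_sym y v) vy|].
  by move=> _ _; apply/negP => xz; apply: (e_K3 vx xz vz).
have [P [bP sP]] := biclique_extend cstar.
exists (exist _ P bP); split; first by apply: (subsetP sP); rewrite !inE eqxx.
exact: subset_trans (subsetUr _ _) sP.
Qed.

(* A vertex adjacent to all neighbours of x inside a biclique P containing x
   is a twin of x on P, so maximality puts it in P. *)
Lemma absorb (P : KBv e) x a : x \in val P ->
  (forall z, z \in val P -> e x z -> e a z) -> a \in val P.
Proof.
move=> xP xa_nb; have cP := biclique_cbip P.
have twinP : {in val P, forall p, e a p = e x p}.
  move=> p pP; case xp: (e x p); first exact: xa_nb.
  apply/negP => ap; have [z [zP xz]] := cbip_neighbour cP xP.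
  have zp : e z p by apply: (cbip_cross cP xP zP pP xz); rewrite xp.
  by apply: (e_K3 ap _ (xa_nb z zP xz)); rewrite e_sym.
have twin : {in a |: val P, forall p, e a p = e x p}.
  by move=> p /setU1P[->|/twinP//]; rewrite [e x a]e_sym (twinP x xP) !e_irr.
(* replacing a by its twin x preserves adjacency on a |: P *)
pose phi u := if u == a then x else u.
have phiP : {in a |: val P, forall u, phi u \in val P}.
  by move=> u; rewrite /phi !inE; case: (u =P a).
have phiL u w : w \in a |: val P -> e u w = e (phi u) w.
  by move=> wQ; rewrite /phi; case: (u =P a) => [->|//]; apply: twin.
have phiE : {in a |: val P &, forall u w, e u w = e (phi u) (phi w)}.
  move=> u w uQ wQ.
  by rewrite phiL // e_sym phiL ?(setU1r _ (phiP u uQ)) // e_sym.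
have cQ : is_cbip e (a |: val P).
  case/cbipP: cP => [[x0 [y0 [x0P y0P xy0]]] tr]; apply/cbipP; split.
    by exists x0, y0; rewrite !inE x0P y0P !orbT.
  move=> u w t uQ wQ tQ; rewrite (phiE u w) // (phiE w t) // (phiE u t) //.
  by apply: tr; apply: phiP.
by rewrite -(biclique_max (valP P) cQ (subsetUr _ _)) !inE eqxx.
Qed.

Lemma absorb_same_side (P Q : KBv e) x a : x \in val P -> x \in val Q ->
  a \in val Q -> Nb x \subset val Q -> ~~ e x a -> a \in val P.
Proof.
move=> xP xQ aQ sQ nxa; apply: (absorb xP) => z zP xz.
have zQ : z \in val Q by apply: (subsetP sQ); rewrite inNb.
by rewrite e_sym; apply: (cbip_cross (biclique_cbip Q) xQ zQ aQ xz nxa).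
Qed.

(* Star-adjacency: distinct bicliques sharing a vertex v whose neighbourhood
   lies in one of them.  KB(G) will be its square. *)
Definition star_adj : rel (KBv e) := fun A C => (val A != val C) &&
  [exists v, [&& v \in val A, v \in val C & (Nb v \subset val A) || (Nb v \subset val C)]].

Lemma star_adj_sym : symmetric star_adj.
Proof.
move=> A C; rewrite /star_adj eq_sym; congr (_ && _).
by apply/existsP/existsP => -[v]; rewrite andbCA orbC; exists v.
Qed.

Lemma star_adj_irr : irreflexive star_adj.
Proof. by move=> A; rewrite /star_adj eqxx. Qed.

Lemma star_adjI (A C : KBv e) v : val A != val C ->
  v \in val A -> v \in val C -> Nb v \subset val A -> star_adj A C.
Proof. by move=> nAC vA vC sA; rewrite /star_adj nAC; apply/existsP; exists v; rewrite vA vC sA. Qed.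

Lemma star_adj_meet (A C : KBv e) :
  star_adj A C -> exists v, v \in val A /\ v \in val C.
Proof. by case/andP=> _ /existsP [v /and3P [vA vC _]]; exists v. Qed.

(* The three configurations of two consecutive star-adjacencies A - B - C,
   via v in A and B and via w in B and C, according to where N(v) and N(w)
   lie; in each of them A and C meet. *)
Lemma meet_outer (A B C : KBv e) v w : v \in val A -> v \in val B ->
  w \in val B -> w \in val C -> Nb v \subset val A -> Nb w \subset val C ->
  exists x, x \in val A /\ x \in val C.
Proof.
move=> vA vB wB wC sv sw; case vw: (e v w).
  by exists w; split => //; apply: (subsetP sv); rewrite inNb.
have [u [uB vu]] := cbip_neighbour (biclique_cbip B) vB.
have uw : e u w by apply: (cbip_cross (biclique_cbip B) vB uB wB vu); rewrite vw.
exists u; split; first by apply: (subsetP sv); rewrite inNb.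
by apply: (subsetP sw); rewrite inNb e_sym.
Qed.

Lemma meet_mixed (A B C : KBv e) v w : v \in val A -> v \in val B ->
  w \in val B -> w \in val C -> Nb v \subset val A -> Nb w \subset val B ->
  exists x, x \in val A /\ x \in val C.
Proof.
move=> vA vB wB wC sv sw; case vw: (e v w).
  by exists w; split => //; apply: (subsetP sv); rewrite inNb.
have [c [cC wc]] := cbip_neighbour (biclique_cbip C) wC.
have cB : c \in val B by apply: (subsetP sw); rewrite inNb.
have cv : e c v by apply: (cbip_cross (biclique_cbip B) wB cB vB wc); rewrite e_sym vw.
by exists c; split => //; apply: (subsetP sv); rewrite inNb e_sym.
Qed.

Lemma meet_inner (A B C : KBv e) v w : v \in val A -> v \in val B ->
  w \in val B -> w \in val C -> Nb v \subset val B -> Nb w \subset val B ->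
  exists x, x \in val A /\ x \in val C.
Proof.
move=> vA vB wB wC sv sw; case vw: (e v w).
  have [a [aA va]] := cbip_neighbour (biclique_cbip A) vA.
  have aB : a \in val B by apply: (subsetP sv); rewrite inNb.
  have nwa : ~~ e w a by apply/negP => wa; apply: (e_K3 vw wa va).
  by exists a; split => //; apply: (absorb_same_side wC wB aB sw nwa).
by exists w; split => //; apply: (absorb_same_side vA vB wB sv); rewrite vw.
Qed.

Lemma star_adj2_meet (A B C : KBv e) : star_adj A B -> star_adj B C ->
  exists x, x \in val A /\ x \in val C.
Proof.
move=> /andP[_ /existsP[v /and3P[vA vB sv]]] /andP[_ /existsP[w /and3P[wB wC sw]]].
case/orP: sv => sv; case/orP: sw => sw.
- exact: meet_mixed vA vB wB wC sv sw.
- exact: meet_outer vA vB wB wC sv sw.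
- exact: meet_inner vA vB wB wC sv sw.
- by have [x [xC xA]] := meet_mixed wC wB vB vA sw sv; exists x.
Qed.

(* Distinct bicliques sharing v are star-adjacent, or both star-adjacent to
   a star of v. *)
Lemma meet_star_adj2 (A C : KBv e) v : val A != val C -> v \in val A -> v \in val C ->
  star_adj A C \/ exists B, star_adj A B /\ star_adj B C.
Proof.
move=> nAC vA vC; have [M [vM sM]] := star_biclique vA.
case: (val M =P val A) => [MA|nMA].
  by left; apply: (star_adjI nAC vA vC); rewrite -MA.
case: (val M =P val C) => [MC|nMC].
  by left; rewrite star_adj_sym; apply: (star_adjI _ vC vA); rewrite 1?eq_sym // -MC.
right; exists M; split; last by apply: (star_adjI _ vM vC) => //; apply/eqP.
by rewrite star_adj_sym; apply: (star_adjI _ vM vA) => //; apply/eqP.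
Qed.

Lemma sq_star_adj (A C : KBv e) : sq star_adj A C = KB_rel e A C.
Proof.
rewrite /sq /KB_rel -val_eqE; case nAC: (val A != val C) => //=.
apply/idP/idP.
  case/orP=> [/star_adj_meet | /existsP [B /andP [AB BC]]].
    by case=> x [xA xC]; apply/meetP; exists x.
  by have [x [xA xC]] := star_adj2_meet AB BC; apply/meetP; exists x.
case/meetP => v [vA vC]; case: (meet_star_adj2 nAC vA vC) => [->//|[B [AB BC]]].
by apply/orP; right; apply/existsP; exists B; rewrite AB BC.
Qed.

Lemma KB_square_root :
  exists (U : finType) (h : rel U), simple_graph h /\ isomorphic (KB_rel e) (sq h).
Proof.
exists (KBv e), star_adj; split; first by split; [exact: star_adj_sym | exact: star_adj_irr].
by exists id; split; [exists id | move=> A C; rewrite sq_star_adj].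
Qed.

End Bicliques.

Lemma sq_net (i j : 'I_6) : sq net_rel i j = (i != j) && ~~ ((2 < i) && (2 < j)).
Proof.
pose adj m n := has (fun p : nat * nat =>
  ((p.1 == m) && (p.2 == n)) || ((p.1 == n) && (p.2 == m))) net_edges.
pose sq_adj m n := (m != n) && (adj m n || has (fun k => adj m k && adj k n) (iota 0 6)).
have table : all (fun m => all (fun n =>
    sq_adj m n == (m != n) && ~~ ((2 < m) && (2 < n))) (iota 0 6)) (iota 0 6).
  by vm_compute.
have -> : sq net_rel i j = sq_adj i j.
  rewrite /sq /sq_adj -val_ord_enum has_map; congr (_ && (_ || _)).
  by apply/existsP/hasP => [[k Pk]|[k _ Pk]]; exists k; rewrite ?mem_ord_enum.
move/allP: table => /(_ i); rewrite mem_iota ltn_ord => /(_ isT).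
by move/allP => /(_ j); rewrite mem_iota ltn_ord => /(_ isT) /eqP.
Qed.

Section NetSquare.
Variables (T : finType) (e : rel T).
Hypotheses (e_simple : simple_graph e) (e_K3 : K3_free e).
Let e_sym : symmetric e := e_simple.1.
Variables (f : KBv e -> 'I_6) (g : 'I_6 -> KBv e).
Hypotheses (fK : cancel f g) (gK : cancel g f).
Hypothesis f_iso : forall A B, sq net_rel (f A) (f B) = KB_rel e A B.

Local Notation adj := (@star_adj _ e).
Local Notation Nb := (Nb e).

Definition pendant (B : KBv e) : bool := 2 < f B.

Lemma pendant_g (t : 'I_6) : pendant (g t) = (2 < t).
Proof. by rewrite /pendant gK. Qed.

Lemma f_neq (A B : KBv e) : (f A != f B) = (A != B).
Proof. by rewrite (inj_eq (can_inj fK)). Qed.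

Lemma KB_relE (A B : KBv e) : KB_rel e A B = (A != B) && ~~ [disjoint val A & val B].
Proof. by rewrite /KB_rel val_eqE. Qed.

Lemma pendant_disjoint (A B : KBv e) x : pendant A -> pendant B -> A != B ->
  x \in val A -> x \in val B -> False.
Proof.
move=> pA pB nAB xA xB; have := f_iso A B.
rewrite sq_net KB_relE f_neq nAB -/(pendant A) -/(pendant B) pA pB /=.
by move/esym/negbFE/meetP; apply; exists x.
Qed.

Lemma meets_inner (A B : KBv e) : A != B -> ~~ pendant B ->
  exists x, x \in val A /\ x \in val B.
Proof.
move=> nAB nB; have := f_iso A B.
by rewrite sq_net KB_relE f_neq nAB -/(pendant B) (negbTE nB) andbF => /esym /meetP.
Qed.

Lemma pendant_star_nbr_excl (A C X : KBv e) : pendant A -> pendant C -> A != C ->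
  adj A X -> adj C X -> False.
Proof.
move=> pA pC nAC AX; rewrite star_adj_sym => XC.
have [x [xA xC]] := star_adj2_meet e_simple e_K3 AX XC.
exact: pendant_disjoint pA pC nAC xA xC.
Qed.

Lemma leave_pendant (S M : KBv e) v : pendant S -> v \in val S -> v \in val M ->
  Nb v \subset val M -> ~~ (Nb v \subset val S) -> ~~ pendant M /\ adj S M.
Proof.
move=> pS vS vM sM nsS.
have nMS : val M != val S by apply/eqP => MS; rewrite -MS sM in nsS.
split; last by rewrite star_adj_sym; apply: (star_adjI nMS vM vS sM).
apply/negP => pM; apply: (pendant_disjoint pS pM _ vS vM).
by rewrite -val_eqE eq_sym.
Qed.

Lemma other_pendants (S : KBv e) : pendant S ->
  exists S1 S2, [/\ pendant S1, pendant S2, S != S1, S != S2 & S1 != S2].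
Proof.
move=> pS; have [a [b [pa pb Sa Sb ab]]] :
    exists a b : 'I_6, [/\ 2 < a, 2 < b, f S != a, f S != b & a != b].
  move: pS; rewrite /pendant; case: (f S) => [[|[|[|[|[|[|?]]]]]] ?] //= _.
  - by exists (@Ordinal 6 4 isT), (@Ordinal 6 5 isT).
  - by exists (@Ordinal 6 3 isT), (@Ordinal 6 5 isT).
  - by exists (@Ordinal 6 3 isT), (@Ordinal 6 4 isT).
by exists (g a), (g b); rewrite !pendant_g -!f_neq !gK.
Qed.

Lemma inner_star_nbr (S : KBv e) : pendant S -> exists X, ~~ pendant X /\ adj S X.
Proof.
move=> pS; pose X := g ord0.
have nX : ~~ pendant X by rewrite pendant_g.
have nSX : S != X by apply/eqP => SX; rewrite SX (negbTE nX) in pS.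
have [v [vS vX]] := meets_inner nSX nX.
case sv: (Nb v \subset val S).
  by exists X; split => //; apply: (star_adjI _ vS vX sv); rewrite val_eqE.
have [M [vM sM]] := star_biclique e_simple e_K3 vS.
by exists M; apply: (leave_pendant pS vS vM sM); rewrite sv.
Qed.

(* Pigeonhole: three pendant bicliques with pairwise distinct inner
   star-neighbours, among only three inner bicliques. *)
Lemma inner_star_nbr_uniq (S X Y : KBv e) : pendant S -> ~~ pendant X -> ~~ pendant Y ->
  adj S X -> adj S Y -> X = Y.
Proof.
move=> pS nX nY SX SY.
have [S1 [S2 [p1 p2 n1 n2 n12]]] := other_pendants pS.
have [X1 [nX1 S1X1]] := inner_star_nbr p1.
have [X2 [nX2 S2X2]] := inner_star_nbr p2.
have apart P Q Z Z' : pendant P -> pendant Q -> P != Q -> adj P Z -> adj Q Z' ->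
    nat_of_ord (f Z) <> f Z'.
  move=> pP pQ nPQ PZ QZ' /val_inj /(can_inj fK) eZ.
  by rewrite eZ in PZ; apply: (pendant_star_nbr_excl pP pQ nPQ PZ QZ').
have := apart _ _ _ _ pS p1 n1 SX S1X1; have := apart _ _ _ _ pS p2 n2 SX S2X2.
have := apart _ _ _ _ pS p1 n1 SY S1X1; have := apart _ _ _ _ pS p2 n2 SY S2X2.
have := apart _ _ _ _ p1 p2 n12 S1X1 S2X2.
move: nX nY nX1 nX2; rewrite /pendant -!leqNgt => *.
apply: (can_inj fK); apply: val_inj => /=; lia.
Qed.

(* If a vertex a of a pendant S has neighbours outside S, then some
   neighbour u of a in S has all its neighbours in S: otherwise a star of u
   and a star of a would both be the unique inner star-neighbour of S, and
   this biclique would contain S. *)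
Lemma pendant_star_centre (S Ma : KBv e) a : pendant S -> a \in val S ->
  a \in val Ma -> Nb a \subset val Ma -> ~~ (Nb a \subset val S) ->
  exists u, [/\ u \in val S, e a u & Nb u \subset val S].
Proof.
move=> pS aS aM sM nsS.
case: (boolP [exists u, [&& u \in val S, e a u & Nb u \subset val S]]).
  by case/existsP => u /and3P [uS au suS]; exists u.
move/existsPn => noU; exfalso.
have [u [uS au]] := cbip_neighbour e_simple e_K3 (biclique_cbip S) aS.
have nsu : ~~ (Nb u \subset val S) by have := noU u; rewrite uS au.
have [Mu [uM sMu]] := star_biclique e_simple e_K3 uS.
have [nMu SMu] := leave_pendant pS uS uM sMu nsu.
have [nMa SMa] := leave_pendant pS aS aM sM nsS.
have eM := inner_star_nbr_uniq pS nMu nMa SMu SMa; subst Mu.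
have SM : val S \subset val Ma.
  apply/subsetP => z zS; case az: (e a z); first by apply: (subsetP sM); rewrite inNb.
  have uz : e u z.
    by apply: (cbip_cross e_simple e_K3 (biclique_cbip S) aS uS zS au); rewrite az.
  by apply: (subsetP sMu); rewrite inNb.
have eMS := biclique_max (valP S) (biclique_cbip Ma) SM.
by rewrite -eMS sM in nsS.
Qed.

Lemma pendant_cross_edge (Sa Sb Ma Mb : KBv e) a b : pendant Sa -> pendant Sb -> Sa != Sb ->
  a \in val Sa -> a \in val Ma -> Nb a \subset val Ma -> ~~ (Nb a \subset val Sa) ->
  b \in val Sb -> b \in val Mb -> Nb b \subset val Mb -> ~~ (Nb b \subset val Sb) ->
  b \in val Ma -> e a b.
Proof.
move=> pa pb nab aS aM saM nsa bS bM sbM nsb bMa.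
apply/negPn/negP => nab'.
have [u [uS au suS]] := pendant_star_centre pa aS aM saM nsa.
have uM : u \in val Ma by apply: (subsetP saM); rewrite inNb.
have ub : e u b by apply: (cbip_cross e_simple e_K3 (biclique_cbip Ma) aM uM bMa au).
have uMb : u \in val Mb by apply: (subsetP sbM); rewrite inNb e_sym.
have [_ SbMb] := leave_pendant pb bS bM sbM nsb.
have nSM : val Sa != val Mb.
  by apply/eqP => SM; rewrite -SM in bM; apply: (pendant_disjoint pa pb nab bM bS).
have SaMb : adj Sa Mb by apply: (star_adjI nSM uS uMb suS).
exact: (pendant_star_nbr_excl pa pb nab SaMb SbMb).
Qed.

Lemma exit_vertex (S1 S2 Y : KBv e) : pendant S1 -> pendant S2 -> S1 != S2 ->
  ~~ pendant Y -> adj S1 Y ->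
  exists q, [/\ q \in val S2, q \in val Y & ~~ (Nb q \subset val S2)].
Proof.
move=> p1 p2 n12 nY S1Y.
have nSY : S2 != Y by apply/eqP => SY; rewrite -SY p2 in nY.
have [q [qS qY]] := meets_inner nSY nY.
exists q; split => //; apply/negP => sq2.
have S2Y : adj S2 Y by apply: (star_adjI _ qS qY sq2); rewrite val_eqE.
exact: (pendant_star_nbr_excl p1 p2 n12 S1Y S2Y).
Qed.

(* Pendant bicliques are closed under taking neighbourhoods: an exit vertex
   p of S1 would yield exit vertices q of S2 and r of S3 with p q r a
   triangle. *)
Lemma pendant_closed (S1 : KBv e) p : pendant S1 -> p \in val S1 -> Nb p \subset val S1.
Proof.
move=> p1 pS; apply/negPn/negP => nsp.
have [S2 [S3 [p2 p3 n12 n13 n23]]] := other_pendants p1.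
have [Y [pY sY]] := star_biclique e_simple e_K3 pS.
have [nY S1Y] := leave_pendant p1 pS pY sY nsp.
have [q [qS qY nsq]] := exit_vertex p1 p2 n12 nY S1Y.
have [Z [qZ sZ]] := star_biclique e_simple e_K3 qS.
have [nZ S2Z] := leave_pendant p2 qS qZ sZ nsq.
have pq : e p q := pendant_cross_edge p1 p2 n12 pS pY sY nsp qS qZ sZ nsq qY.
have [r [rS rY nsr]] := exit_vertex p1 p3 n13 nY S1Y.
have [W [rW sW]] := star_biclique e_simple e_K3 rS.
have [nW S3W] := leave_pendant p3 rS rW sW nsr.
have pr : e p r := pendant_cross_edge p1 p3 n13 pS pY sY nsp rS rW sW nsr rY.
have [r' [r'S r'Z nsr']] := exit_vertex p2 p3 n23 nZ S2Z.
have [V [r'V sV]] := star_biclique e_simple e_K3 r'S.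
have [nV S3V] := leave_pendant p3 r'S r'V sV nsr'.
have qr' : e q r' := pendant_cross_edge p2 p3 n23 qS qZ sZ nsq r'S r'V sV nsr' r'Z.
have qV : q \in val V by apply: (subsetP sV); rewrite inNb e_sym.
have eVW := inner_star_nbr_uniq p3 nV nW S3V S3W; subst V.
have rq : e r q.
  by apply: (pendant_cross_edge p3 p2 _ rS rW sW nsr qS qZ sZ nsq qV); rewrite eq_sym.
by apply: (e_K3 pq _ pr); rewrite e_sym.
Qed.

Lemma pendant_adj_inner (S X : KBv e) : pendant S -> ~~ pendant X -> adj S X.
Proof.
move=> pS nX.
have nSX : S != X by apply/eqP => SX; rewrite SX (negbTE nX) in pS.
have [v [vS vX]] := meets_inner nSX nX.
by apply: (star_adjI _ vS vX (pendant_closed pS vS)); rewrite val_eqE.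
Qed.

(* This contradicts the uniqueness of inner star-neighbours. *)
Lemma no_KB_net_square : False.
Proof.
pose S := g (@Ordinal 6 3 isT); pose X0 := g (@Ordinal 6 0 isT); pose X1 := g (@Ordinal 6 1 isT).
have pS : pendant S by rewrite pendant_g.
have nX0 : ~~ pendant X0 by rewrite pendant_g.
have nX1 : ~~ pendant X1 by rewrite pendant_g.
have := inner_star_nbr_uniq pS nX0 nX1 (pendant_adj_inner pS nX0) (pendant_adj_inner pS nX1).
by move/(congr1 f); rewrite !gK.
Qed.

End NetSquare.

Theorem corollary2 :
  (forall (T : finType) (e : rel T), simple_graph e -> K3_free e ->
     exists (U : finType) (h : rel U), simple_graph h /\ isomorphic (KB_rel e) (sq h))
  /\
  (forall (T : finType) (e : rel T), simple_graph e -> K3_free e ->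
     ~ isomorphic (KB_rel e) (sq net_rel)).
Proof.
split; first by move=> T e e_simple e_K3; apply: KB_square_root.
move=> T e e_simple e_K3 [f [[g fK gK] f_iso]].
exact: (no_KB_net_square e_simple e_K3 fK gK f_iso).
Qed.
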